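(* Let $k\geq 1$ be an integer and let $\psi\in\Psi_{2k+1}$. For $d\in\{1,2k+1\}$, let $b_{n,d}$ denote the $d$-dimensional Schoenberg coefficients of $\psi$; in particular, $b_{n,1}$ are its Fourier cosine coefficients, i.e. $\psi(\theta)=\sum_{n\ge0} b_{n,1}\cos(n\theta)$. Then for every integer $n\geq 0$, \[ b_{n,2k+1}=\sum_{i=0}^k a_i(n,k)\,b_{n+2i,1}, \] where \[ a_i(n,k)=\frac{(-1)^i}{2^k}\binom{k}{i}\frac{(n+k)(n+2i)}{(2k-1)!!}\,\frac{(n+1)_{(2k-1)}}{(n+i)_{(k+1)}}\qquad\text{for }(i,n)\neq(0,0), \] and $a_0(0,k)=1$.
   Context: For an integer $d\ge1$, $\mathbb{S}^d=\{x\in\mathbb{R}^{d+1}:\|x\|=1\}$ and $\theta(x,y)=\arccos(\langle x,y\rangle)$ is the great circle distance. $\Psi_d$ denotes the class of continuous functions $\psi:[0,\pi]\to\mathbb{R}$ with $\psi(0)=1$ such that $(x,y)\mapsto\psi(\theta(x,y))$ is positive definite on $\mathbb{S}^d$, i.e. $\sum_{i,j=1}^m c_ic_j\psi(\theta(x_i,x_j))\ge0$ for all $m\ge1$, all real $c_1,\dots,c_m$ and all distinct $x_1,\dots,x_m\in\mathbb{S}^d$. One has $\Psi_1\supset\Psi_2\supset\cdots$, and (Schoenberg) $\psi\in\Psi_d$ iff $\psi(\theta)=\sum_{n=0}^\infty b_{n,d}\,\frac{C_n^{(d-1)/2}(\cos\theta)}{C_n^{(d-1)/2}(1)}$ for unique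 coefficients $b_{n,d}\ge0$ with $\sum_n b_{n,d}=1$; these $b_{n,d}$ are the $d$-dimensional Schoenberg coefficients of $\psi$. Here $C_n^\lambda$ are Gegenbauer polynomials, with the convention that for $d=1$ the normalized term $C_n^0(\cos\theta)/C_n^0(1)$ is $\cos(n\theta)$, and $C_n^{1/2}=P_n$ are Legendre polynomials. Notation: $(2k-1)!!=\prod_{j=1}^k(2j-1)$, and $(x)_{(m)}=x(x+1)\cdots(x+m-1)$ is the Pochhammer symbol (with $(x)_{(0)}=1$). *)

From Stdlib Require Import Reals Lra.
Open Scope R_scope.

(* Points of R^(d+1) are represented as functions nat -> R; only indices 0..d matter. *)
Definition inner (d : nat) (x y : nat -> R) : R := sum_f_R0 (fun l => x l * y l) d.

Definition on_sphere (d : nat) (x : nat -> R) : Prop := inner d x x = 1.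

Definition distinct_pt (d : nat) (x y : nat -> R) : Prop :=
  exists l, (l <= d)%nat /\ x l <> y l.

Definition gcdist (d : nat) (x y : nat -> R) : R := acos (inner d x y).

Fixpoint fsum (m : nat) (f : nat -> R) : R :=
  match m with O => 0 | S m' => fsum m' f + f m' end.

Definition cont_on_0pi (psi : R -> R) : Prop :=
  forall t, 0 <= t <= PI -> limit1_in psi (fun s => 0 <= s <= PI) (psi t) t.

Definition InPsi (d : nat) (psi : R -> R) : Prop :=
  cont_on_0pi psi /\ psi 0 = 1 /\
  forall (m : nat) (c : nat -> R) (x : nat -> nat -> R),
    (forall i, (i < m)%nat -> on_sphere d (x i)) ->
    (forall i j, (i < m)%nat -> (j < m)%nat -> i <> j -> distinct_pt d (x i) (x j)) ->
    0 <= fsum m (fun i => fsum m (fun j => c i * c j * psi (gcdist d (x i) (x j)))).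

(* Gegenbauer polynomials C_n^lam via the standard three-term recurrence:
   C_0 = 1, C_1 = 2 lam t, (n+2) C_{n+2} = 2 t (n+1+lam) C_{n+1} - (n+2 lam) C_n. *)
Fixpoint gegen2 (lam t : R) (n : nat) : R * R :=
  (* returns (C_n, C_{n+1}) *)
  match n with
  | O => (1, 2 * lam * t)
  | S n' => let (a, b) := gegen2 lam t n' in
            (b, (2 * t * (INR n' + 1 + lam) * b - (INR n' + 2 * lam) * a) / (INR n' + 2))
  end.

Definition gegenbauer (n : nat) (lam t : R) : R := fst (gegen2 lam t n).

Definition schoen_term (d n : nat) (th : R) : R :=
  match d with
  | 1%nat => cos (INR n * th)
  | _ => let lam := (INR d - 1) / 2 in gegenbauer n lam (cos th) / gegenbauer n lam 1
  end.

Definition SchoenbergCoeffs (d : nat) (psi : R -> R) (b : nat -> R) : Prop :=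
  (forall n, 0 <= b n) /\ infinite_sum b 1 /\
  forall th, 0 <= th <= PI -> infinite_sum (fun n => b n * schoen_term d n th) (psi th).

Fixpoint poch (x : R) (m : nat) : R :=
  match m with O => 1 | S m' => poch x m' * (x + INR m') end.

(* (2k-1)!! = prod_{j=1}^k (2j-1) *)
Fixpoint dfact_odd (k : nat) : R :=
  match k with O => 1 | S k' => dfact_odd k' * (2 * INR k' + 1) end.

Definition acoef (i n k : nat) : R :=
  match i, n with
  | O, O => 1
  | _, _ => (-1) ^ i / 2 ^ k * C k i * ((INR n + INR k) * (INR n + 2 * INR i)) / dfact_odd k
            * (poch (INR n + 1) (2 * k - 1) / poch (INR n + INR i) (k + 1))
  end.

(* Write lam = k for the Gegenbauer index of S^(2k+1) and w_l = (lam)_l / l!.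
   1. Gegenbauer polynomials are finite cosine sums:
        C_m^lam (cos th) = sum_(l <= m) w_l w_(m-l) cos((m - 2l) th),
      since the right-hand side satisfies the defining three-term recurrence.
      Hence |C_m^lam(cos th)| <= C_m^lam(1) = (2 lam)_m / m!.
   2. Integrating psi(th) cos(q th) over [0, pi] against both expansions of psi
      (both converge uniformly, by the Weierstrass test, because the
      coefficients are summable and the terms are bounded by 1) gives
        b1_q = sum_m b_m E(m, q),
      where E(m, q) is the q-th cosine coefficient of the normalized
      C_m^lam(cos th) / C_m^lam(1), an explicit finite expression.
   3. The matrix (a_i(n,k)) is a left inverse of E on the relevant rows:
        sum_(i <= k) a_i(n,k) E(m, n + 2i) = [m = n].
      After clearing denominators this is the vanishing of a (2k+n)-th finite
      difference of a polynomial of degree 2k+n-2 (degree 2k-2 when n = 0).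
   The theorem follows by taking the combination sum_i a_i(n,k) b1_(n+2i)
   of the series from step 2 and applying step 3 termwise. *)

From Stdlib Require Import Reals Lra Lia ZArith.
From Coquelicot Require Import Coquelicot.
Open Scope R_scope.

Lemma INR_fact_pos n : 0 < INR (fact n).
Proof. apply lt_0_INR, lt_O_fact. Qed.

Lemma INR_fact_S n : INR (fact (S n)) = (INR n + 1) * INR (fact n).
Proof. rewrite fact_simpl, mult_INR, S_INR. reflexivity. Qed.

Lemma INR_fact_pred n : (1 <= n)%nat -> INR (fact n) = INR n * INR (fact (n - 1)).
Proof.
  intros Hn. replace n with (S (n - 1)) at 1 by lia.
  rewrite INR_fact_S, minus_INR by lia. simpl (INR 1). ring.
Qed.

Lemma INR_ge_1 n : (1 <= n)%nat -> 1 <= INR n.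
Proof. intros Hn. apply (le_INR 1); lia. Qed.

Lemma poch_pos x m : 0 < x -> 0 < poch x m.
Proof.
  intros Hx. induction m as [|m IH]; simpl; [lra|].
  apply Rmult_lt_0_compat; [exact IH|]. pose proof (pos_INR m). lra.
Qed.

Lemma poch_S x m : poch x (S m) = poch x m * (x + INR m).
Proof. reflexivity. Qed.

Lemma poch_S_front x m : poch x (S m) = x * poch (x + 1) m.
Proof.
  induction m as [|m IH]; [simpl; ring|].
  change (poch x (S (S m))) with (poch x (S m) * (x + INR (S m))).
  rewrite IH. simpl poch. rewrite S_INR. ring.
Qed.

Lemma poch_fact a b : poch (INR a + 1) b = INR (fact (a + b)) / INR (fact a).
Proof.
  induction b as [|b IH].
  - simpl. rewrite Nat.add_0_r. field. apply INR_fact_neq_0.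
  - simpl poch. rewrite IH, Nat.add_succ_r, INR_fact_S, plus_INR.
    field. apply INR_fact_neq_0.
Qed.

Lemma poch_reflect m : forall x, poch (- x - INR m + 1) m = (-1) ^ m * poch x m.
Proof.
  induction m as [|m IH]; intro x; [simpl; ring|].
  rewrite poch_S_front, S_INR.
  replace (- x - (INR m + 1) + 1 + 1) with (- x - INR m + 1) by ring.
  rewrite IH. simpl poch. simpl pow. ring.
Qed.

Lemma poch_root m x j : (j < m)%nat -> x + INR j = 0 -> poch x m = 0.
Proof.
  induction m as [|m IH]; intros Hj Hx; [lia|].
  simpl. destruct (Nat.eq_dec j m) as [->|Hne].
  - rewrite Hx. ring.
  - rewrite IH by (auto; lia). ring.
Qed.

Lemma dfact_odd_pos k : 0 < dfact_odd k.
Proof.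
  induction k as [|k IH]; simpl; [lra|].
  apply Rmult_lt_0_compat; [exact IH|]. pose proof (pos_INR k). lra.
Qed.

Lemma dfact_odd_fact k : dfact_odd k * 2 ^ k * INR (fact k) = INR (fact (2 * k)).
Proof.
  induction k as [|k IH]; [simpl; ring|].
  replace (2 * S k)%nat with (S (S (2 * k))) by lia.
  rewrite !INR_fact_S. simpl dfact_odd. simpl pow. rewrite <- IH.
  rewrite S_INR, mult_INR. simpl INR. ring.
Qed.

Lemma fact_2k_pred k : (1 <= k)%nat ->
  INR (fact (2 * k - 1)) = dfact_odd k * 2 ^ k * INR (fact k) / (2 * INR k).
Proof.
  intros Hk. rewrite dfact_odd_fact, (INR_fact_pred (2 * k)) by lia.
  rewrite mult_INR. simpl (INR 2). pose proof (INR_ge_1 k Hk). field. lra.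
Qed.

(* Binomial coefficients defined by Pascal's rule (convenient for induction). *)
Fixpoint binom (n k : nat) : R :=
  match n, k with
  | O, O => 1
  | O, S _ => 0
  | S _, O => 1
  | S n', S k' => binom n' k' + binom n' (S k')
  end.

Lemma binom_gt n : forall k, (n < k)%nat -> binom n k = 0.
Proof.
  induction n as [|n IH]; intros k Hk; destruct k; simpl; try lia; auto.
  rewrite !IH by lia. ring.
Qed.

Lemma binom_fact n : forall k, (k <= n)%nat ->
  binom n k = INR (fact n) / (INR (fact k) * INR (fact (n - k))).
Proof.
  induction n as [|n IH]; intros k Hk.
  - assert (k = 0)%nat by lia. subst. simpl. field.
  - destruct k as [|k].
    + rewrite Nat.sub_0_r. simpl binom. simpl (INR (fact 0)).
      field. apply INR_fact_neq_0.
    + simpl binom. destruct (Nat.eq_dec k n) as [->|Hne].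
      * rewrite (binom_gt n (S n)), IH, !Nat.sub_diag by lia.
        field. repeat split; apply INR_fact_neq_0.
      * rewrite !IH by lia.
        replace (S n - S k)%nat with (S (n - S k)) by lia.
        replace (n - k)%nat with (S (n - S k)) by lia.
        set (m := (n - S k)%nat).
        rewrite !INR_fact_S.
        replace (INR n) with (INR k + INR m + 1) by (rewrite <- plus_INR, <- S_INR; f_equal; lia).
        pose proof (INR_fact_pos k). pose proof (INR_fact_pos m).
        pose proof (pos_INR k). pose proof (pos_INR m).
        field. lra.
Qed.

Lemma pow_m1_sub k r : (r <= k)%nat -> (-1) ^ (k - r) = (-1) ^ k * (-1) ^ r.
Proof.
  intros H. replace k with ((k - r) + r)%nat at 2 by lia.
  rewrite pow_add, Rmult_assoc, <- pow_add.
  replace (r + r)%nat with (2 * r)%nat by lia.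
  rewrite pow_mult. replace ((-1) ^ 2) with 1 by ring. rewrite pow1. ring.
Qed.

Lemma sum_scal_l c f N : sum_f_R0 (fun i => c * f i) N = c * sum_f_R0 f N.
Proof. rewrite scal_sum. apply sum_eq. intros; ring. Qed.

Lemma sum_zero (f : nat -> R) m : (forall l, (l <= m)%nat -> f l = 0) -> sum_f_R0 f m = 0.
Proof. intros H. rewrite (sum_eq _ (fun _ => 0)) by auto. rewrite sum_cte. ring. Qed.

Lemma sum_single (f : nat -> R) m l0 : (l0 <= m)%nat ->
  (forall l, (l <= m)%nat -> l <> l0 -> f l = 0) -> sum_f_R0 f m = f l0.
Proof.
  intros Hl0 Hf. induction m as [|m IH].
  - assert (l0 = 0)%nat by lia. subst. reflexivity.
  - rewrite tech5. destruct (Nat.eq_dec l0 (S m)) as [->|Hne].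
    + rewrite sum_zero by (intros i Hi; apply Hf; lia). ring.
    + rewrite IH, (Hf (S m)) by (auto; lia). ring.
Qed.

Lemma sum_split a b f :
  sum_f_R0 f (a + S b) = sum_f_R0 f a + sum_f_R0 (fun j => f (S a + j)%nat) b.
Proof.
  induction b as [|b IH].
  - rewrite Nat.add_1_r, tech5. simpl. rewrite Nat.add_0_r. reflexivity.
  - rewrite Nat.add_succ_r, tech5, IH, tech5, Rplus_assoc. reflexivity.
Qed.

Lemma sum_rev a : forall f, sum_f_R0 f a = sum_f_R0 (fun r => f (a - r)%nat) a.
Proof.
  induction a as [|a IH]; intro f; [reflexivity|].
  rewrite tech5, (decomp_sum (fun r => f (S a - r)%nat)) by lia.
  simpl pred. rewrite Nat.sub_0_r, (IH f), Rplus_comm. reflexivity.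
Qed.

Lemma sum_skip a : forall b f, (forall j, (j < a)%nat -> f j = 0) ->
  sum_f_R0 f (a + b) = sum_f_R0 (fun i => f (a + i)%nat) b.
Proof.
  induction a as [|a IH]; intros b f Hf; [reflexivity|].
  replace (S a + b)%nat with (S (a + b)) by lia.
  rewrite decomp_sum by lia. simpl pred. rewrite Hf, Rplus_0_l by lia.
  rewrite IH; [reflexivity|]. intros. apply Hf. lia.
Qed.

(** * Gegenbauer polynomials as finite cosine sums *)

(* w_l = (lam)_l / l!, the coefficients of (1 - z)^(-lam). *)
Definition gcoef (lam : R) (l : nat) : R := poch lam l / INR (fact l).

Lemma gcoef_0 lam : gcoef lam 0 = 1.
Proof. unfold gcoef; simpl; field. Qed.

Lemma gcoef_S lam l : gcoef lam (S l) = gcoef lam l * (lam + INR l) / (INR l + 1).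
Proof.
  unfold gcoef. simpl poch. rewrite INR_fact_S.
  pose proof (INR_fact_pos l). pose proof (pos_INR l). field. lra.
Qed.

Lemma gcoef_nonneg lam l : 0 <= lam -> 0 <= gcoef lam l.
Proof.
  intros Hlam. unfold gcoef. apply Rdiv_le_0_compat; [|apply INR_fact_pos].
  induction l as [|l IH]; simpl; [lra|].
  apply Rmult_le_pos; [exact IH|]. pose proof (pos_INR l). lra.
Qed.

(* The cosine sum sum_(l <= m) w_l w_(m-l) cos((m - 2l) th); it will be shown
   to equal C_m^lam(cos th). *)
Definition gegen_cos (lam th : R) (m : nat) : R :=
  sum_f_R0 (fun l => gcoef lam l * gcoef lam (m - l) * cos ((INR m - 2 * INR l) * th)) m.

Lemma gegen_cos_SS lam th m :
  gegen_cos lam th (S (S m)) =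
  gcoef lam (S (S m)) * cos ((INR m + 2) * th)
  + sum_f_R0 (fun j => gcoef lam (S j) * gcoef lam (S m - j)
                       * cos ((INR m - 2 * INR j) * th)) m
  + gcoef lam (S (S m)) * cos (- (INR m + 2) * th).
Proof.
  unfold gegen_cos. rewrite tech5, decomp_sum by lia. simpl pred.
  rewrite Nat.sub_diag, Nat.sub_0_r, gcoef_0, !S_INR.
  replace ((INR m + 1 + 1 - 2 * INR 0) * th) with ((INR m + 2) * th) by (simpl; ring).
  replace ((INR m + 1 + 1 - 2 * (INR m + 1 + 1)) * th) with (- (INR m + 2) * th) by ring.
  rewrite Rmult_1_l, Rmult_1_r. f_equal. f_equal. apply sum_eq; intros j _.
  rewrite !S_INR. replace (S (S m) - S j)%nat with (S m - j)%nat by lia.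
  f_equal. f_equal. ring.
Qed.

Lemma gegen_cos_mul_cos lam th m :
  2 * cos th * gegen_cos lam th (S m) =
  gcoef lam (S m) * cos ((INR m + 2) * th)
  + sum_f_R0 (fun j => gcoef lam (S j) * gcoef lam (m - j)
                       * cos ((INR m - 2 * INR j) * th)) m
  + sum_f_R0 (fun j => gcoef lam j * gcoef lam (S m - j)
                       * cos ((INR m - 2 * INR j) * th)) m
  + gcoef lam (S m) * cos (- (INR m + 2) * th).
Proof.
  set (w := gcoef lam). unfold gegen_cos. rewrite scal_sum.
  rewrite (sum_eq _ (fun l => w l * w (S m - l)%nat * cos ((INR m + 2 - 2 * INR l) * th)
                            + w l * w (S m - l)%nat * cos ((INR m - 2 * INR l) * th))).
  2:{ intros l _. fold w. rewrite S_INR.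
      replace ((INR m + 2 - 2 * INR l) * th) with ((INR m + 1 - 2 * INR l) * th + th) by ring.
      replace ((INR m - 2 * INR l) * th) with ((INR m + 1 - 2 * INR l) * th - th) by ring.
      rewrite cos_plus, cos_minus. ring. }
  rewrite plus_sum, decomp_sum by lia.
  rewrite (tech5 (fun l => w l * _ * cos ((INR m - 2 * INR l) * th))).
  simpl pred. rewrite Nat.sub_0_r, Nat.sub_diag.
  replace (INR m + 2 - 2 * INR 0) with (INR m + 2) by (simpl; ring).
  replace (INR m - 2 * INR (S m)) with (- (INR m + 2)) by (rewrite S_INR; ring).
  rewrite (sum_eq (fun i => w (S i) * w (S m - S i)%nat * cos ((INR m + 2 - 2 * INR (S i)) * th))
                  (fun j => w (S j) * w (m - j)%nat * cos ((INR m - 2 * INR j) * th))).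
  2:{ intros j _. replace (S m - S j)%nat with (m - j)%nat by lia.
      rewrite S_INR. f_equal. f_equal. ring. }
  unfold w. rewrite gcoef_0. ring.
Qed.

(* The coefficient identity behind the three-term recurrence. *)
Lemma gcoef_conv_rec lam m j : (j <= m)%nat ->
  (INR m + 2) * (gcoef lam (S j) * gcoef lam (S m - j)) =
  (INR m + 1 + lam) * (gcoef lam (S j) * gcoef lam (m - j) + gcoef lam j * gcoef lam (S m - j))
  - (INR m + 2 * lam) * (gcoef lam j * gcoef lam (m - j)).
Proof.
  intros Hj. replace (S m - j)%nat with (S (m - j)) by lia. rewrite !gcoef_S.
  replace (INR m) with (INR j + INR (m - j)) by (rewrite <- plus_INR; f_equal; lia).
  pose proof (pos_INR j). pose proof (pos_INR (m - j)).
  field. lra.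
Qed.

Lemma gegen_cos_rec lam th m :
  (INR m + 2) * gegen_cos lam th (S (S m)) =
  2 * cos th * (INR m + 1 + lam) * gegen_cos lam th (S m)
  - (INR m + 2 * lam) * gegen_cos lam th m.
Proof.
  replace (2 * cos th * (INR m + 1 + lam) * gegen_cos lam th (S m))
    with ((INR m + 1 + lam) * (2 * cos th * gegen_cos lam th (S m))) by ring.
  rewrite gegen_cos_SS, gegen_cos_mul_cos.
  assert (Hedge : (INR m + 2) * gcoef lam (S (S m)) = (INR m + 1 + lam) * gcoef lam (S m)).
  { rewrite (gcoef_S lam (S m)), S_INR. pose proof (pos_INR m). field. lra. }
  assert (Hmid :
    (INR m + 2) * sum_f_R0 (fun j => gcoef lam (S j) * gcoef lam (S m - j)
                                     * cos ((INR m - 2 * INR j) * th)) m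
    = (INR m + 1 + lam)
        * (sum_f_R0 (fun j => gcoef lam (S j) * gcoef lam (m - j) * cos ((INR m - 2 * INR j) * th)) m
           + sum_f_R0 (fun j => gcoef lam j * gcoef lam (S m - j) * cos ((INR m - 2 * INR j) * th)) m)
      - (INR m + 2 * lam) * gegen_cos lam th m).
  { unfold gegen_cos. rewrite <- plus_sum, !scal_sum, <- minus_sum.
    apply sum_eq. intros j Hj.
    transitivity ((INR m + 2) * (gcoef lam (S j) * gcoef lam (S m - j))
                  * cos ((INR m - 2 * INR j) * th)); [ring|].
    rewrite gcoef_conv_rec by exact Hj. ring. }
  transitivity (((INR m + 2) * gcoef lam (S (S m))) * cos ((INR m + 2) * th)
    + (INR m + 2) * sum_f_R0 (fun j => gcoef lam (S j) * gcoef lam (S m - j)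
                                       * cos ((INR m - 2 * INR j) * th)) m
    + ((INR m + 2) * gcoef lam (S (S m))) * cos (- (INR m + 2) * th)); [ring|].
  rewrite Hmid, Hedge. ring.
Qed.

Lemma gegen2_cos lam th m :
  gegen2 lam (cos th) m = (gegen_cos lam th m, gegen_cos lam th (S m)).
Proof.
  induction m as [|m IH].
  - unfold gegen_cos. simpl. rewrite !gcoef_0.
    replace (gcoef lam 1) with lam by (unfold gcoef; simpl; field).
    replace ((1 - 2 * 0) * th) with th by ring.
    replace ((1 - 2 * 1) * th) with (- th) by ring.
    replace ((0 - 2 * 0) * th) with 0 by ring.
    rewrite cos_neg, cos_0. f_equal; ring.
  - simpl. rewrite IH. f_equal.
    pose proof (pos_INR m).
    apply (Rmult_eq_reg_l (INR m + 2)); [|lra].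
    rewrite gegen_cos_rec. field. lra.
Qed.

Lemma gegenbauer_cos n lam th : gegenbauer n lam (cos th) = gegen_cos lam th n.
Proof. unfold gegenbauer. rewrite gegen2_cos. reflexivity. Qed.

Definition gegen_one (lam : R) (m : nat) : R := poch (2 * lam) m / INR (fact m).

Lemma gegen2_one lam m : gegen2 lam 1 m = (gegen_one lam m, gegen_one lam (S m)).
Proof.
  induction m as [|m IH].
  - unfold gegen_one; simpl. f_equal; field.
  - simpl. rewrite IH. f_equal. unfold gegen_one. rewrite !poch_S.
    rewrite !INR_fact_S, !S_INR.
    pose proof (INR_fact_pos m). pose proof (pos_INR m).
    field. repeat split; lra.
Qed.

Lemma gegenbauer_one n lam : gegenbauer n lam 1 = gegen_one lam n.
Proof. unfold gegenbauer. rewrite gegen2_one. reflexivity. Qed.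

Lemma gegen_one_pos k m : (1 <= k)%nat -> 0 < gegen_one (INR k) m.
Proof.
  intros Hk. unfold gegen_one. apply Rdiv_lt_0_compat; [|apply INR_fact_pos].
  apply poch_pos. pose proof (INR_ge_1 k Hk). lra.
Qed.

Lemma schoen_term_odd k n th : (1 <= k)%nat ->
  schoen_term (2 * k + 1) n th = gegen_cos (INR k) th n / gegen_one (INR k) n.
Proof.
  intros Hk. replace (2 * k + 1)%nat with (S (S (2 * k - 1))) by lia.
  unfold schoen_term.
  replace ((INR (S (S (2 * k - 1))) - 1) / 2) with (INR k).
  2:{ rewrite !S_INR, minus_INR, mult_INR by lia. simpl. field. }
  rewrite gegenbauer_cos, gegenbauer_one. reflexivity.
Qed.

(* Since the w_l are non-negative, |C_m^lam(cos th)| <= C_m^lam(1). *)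
Lemma schoen_term_odd_bound k th m : (1 <= k)%nat ->
  Rabs (gegen_cos (INR k) th m / gegen_one (INR k) m) <= 1.
Proof.
  intros Hk. pose proof (gegen_one_pos k m Hk) as Hpos.
  assert (Hw : forall l, 0 <= gcoef (INR k) l).
  { intro l. apply gcoef_nonneg, pos_INR. }
  assert (Hone : gegen_cos (INR k) 0 m = gegen_one (INR k) m).
  { rewrite <- gegenbauer_one, <- cos_0. symmetry. apply gegenbauer_cos. }
  assert (Habs : Rabs (gegen_cos (INR k) th m) <= gegen_cos (INR k) 0 m).
  { unfold gegen_cos. eapply Rle_trans; [apply sum_f_R0_triangle|].
    apply sum_Rle. intros l _. rewrite Rmult_0_r, cos_0, Rmult_1_r, Rabs_mult.
    pose proof (Rmult_le_pos _ _ (Hw l) (Hw (m - l)%nat)).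
    rewrite (Rabs_pos_eq (gcoef _ l * _)) by assumption.
    pose proof (COS_bound ((INR m - 2 * INR l) * th)).
    rewrite <- (Rmult_1_r (gcoef (INR k) l * gcoef (INR k) (m - l))) at 2.
    apply Rmult_le_compat_l; [assumption|]. apply Rabs_le. lra. }
  rewrite Rabs_div, (Rabs_pos_eq (gegen_one _ _)) by lra.
  apply (Rmult_le_reg_r (gegen_one (INR k) m)); [exact Hpos|].
  unfold Rdiv. rewrite Rmult_assoc, Rinv_l by lra. lra.
Qed.

(** * Finite differences annihilate polynomials *)

(* fd_poly d f: f is a polynomial function of degree <= d, in the sense that
   d successive forward differences f(x+1) - f(x) lead to a constant. *)
Fixpoint fd_poly (d : nat) (f : R -> R) : Prop :=
  match d with
  | O => exists c, forall x, f x = c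
  | S d' => exists g, fd_poly d' g /\ forall x, f (x + 1) - f x = g x
  end.

Lemma fd_poly_ext d : forall f g, (forall x, f x = g x) -> fd_poly d f -> fd_poly d g.
Proof.
  induction d as [|d IH]; simpl; intros f g Hfg Hf.
  - destruct Hf as [c Hc]. exists c. intro x. rewrite <- Hfg. auto.
  - destruct Hf as [h [Hh Hd]]. exists h. split; auto. intro x. rewrite <- !Hfg. auto.
Qed.

Lemma fd_poly_const d c : fd_poly d (fun _ => c).
Proof.
  revert c. induction d as [|d IH]; simpl; intro c.
  - exists c; auto.
  - exists (fun _ => 0). split; [apply IH|]. intros; ring.
Qed.

Lemma fd_poly_plus d : forall f g, fd_poly d f -> fd_poly d g -> fd_poly d (fun x => f x + g x).
Proof.
  induction d as [|d IH]; simpl; intros f g Hf Hg.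
  - destruct Hf as [c Hc]; destruct Hg as [e He].
    exists (c + e). intro; rewrite Hc, He; auto.
  - destruct Hf as [f' [Hf' Hdf]]; destruct Hg as [g' [Hg' Hdg]].
    exists (fun x => f' x + g' x). split; [apply IH; auto|].
    intro x. rewrite <- Hdf, <- Hdg. ring.
Qed.

Lemma fd_poly_scal d : forall f a, fd_poly d f -> fd_poly d (fun x => a * f x).
Proof.
  induction d as [|d IH]; simpl; intros f a Hf.
  - destruct Hf as [c Hc]. exists (a * c). intro; rewrite Hc; auto.
  - destruct Hf as [f' [Hf' Hdf]]. exists (fun x => a * f' x).
    split; [apply IH; auto|]. intro x. rewrite <- Hdf. ring.
Qed.

Lemma fd_poly_shift d : forall f a, fd_poly d f -> fd_poly d (fun x => f (x + a)).
Proof.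
  induction d as [|d IH]; simpl; intros f a Hf.
  - destruct Hf as [c Hc]. exists c. intro; rewrite Hc; auto.
  - destruct Hf as [f' [Hf' Hdf]]. exists (fun x => f' (x + a)).
    split; [apply IH; auto|].
    intro x. rewrite <- Hdf. replace (x + 1 + a) with (x + a + 1) by ring. auto.
Qed.

Lemma fd_poly_reflect d : forall f a, fd_poly d f -> fd_poly d (fun x => f (a - x)).
Proof.
  induction d as [|d IH]; simpl; intros f a Hf.
  - destruct Hf as [c Hc]. exists c. intro; rewrite Hc; auto.
  - destruct Hf as [f' [Hf' Hdf]]. exists (fun x => -1 * f' ((a - 1) - x)).
    split; [apply fd_poly_scal, IH; auto|].
    intro x. rewrite <- Hdf. replace (a - 1 - x + 1) with (a - x) by ring.
    replace (a - (x + 1)) with (a - 1 - x) by ring. ring.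
Qed.

Lemma fd_poly_id : fd_poly 1 (fun x => x).
Proof. simpl. exists (fun _ => 1). split; [exists 1; auto|]. intros; ring. Qed.

(* Degrees add under products (Leibniz rule for differences, by induction
   on the total degree). *)
Lemma fd_poly_mult a b f g :
  fd_poly a f -> fd_poly b g -> fd_poly (a + b) (fun x => f x * g x).
Proof.
  revert a b f g.
  assert (Hgen : forall n a b f g, (a + b <= n)%nat ->
            fd_poly a f -> fd_poly b g -> fd_poly (a + b) (fun x => f x * g x)).
  { induction n as [|n IH]; intros a b f g Hab Hf Hg.
    - assert (a = 0)%nat by lia. assert (b = 0)%nat by lia. subst. simpl in *.
      destruct Hf as [c Hc]; destruct Hg as [e He].
      exists (c * e). intro; rewrite Hc, He; auto.
    - destruct a as [|a].
      + destruct Hf as [c Hc]. apply (fd_poly_ext _ (fun x => c * g x)).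
        { intro; rewrite Hc; auto. }
        apply fd_poly_scal; auto.
      + destruct b as [|b].
        * destruct Hg as [e He]. rewrite Nat.add_0_r.
          apply (fd_poly_ext _ (fun x => e * f x)).
          { intro; rewrite He; ring. }
          apply fd_poly_scal; auto.
        * destruct Hf as [f' [Hf' Hdf]]. pose proof Hg as [g' [Hg' Hdg]].
          replace (S a + S b)%nat with (S (a + S b)) by lia. simpl.
          exists (fun x => f' x * g (x + 1) + f x * g' x). split.
          -- apply fd_poly_plus.
             ++ apply IH; [lia|auto|]. apply fd_poly_shift. auto.
             ++ replace (a + S b)%nat with (S a + b)%nat by lia.
                apply IH; [lia| |auto]. simpl; exists f'; auto.
          -- intro x. rewrite <- Hdf, <- Hdg. ring. }
  intros a b f g. apply (Hgen (a + b)%nat). lia.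
Qed.

Lemma fd_poly_poch m : forall c, fd_poly m (fun x => poch (x + c) m).
Proof.
  induction m as [|m IH]; intro c; [simpl; exists 1; auto|].
  rewrite <- Nat.add_1_r.
  apply (fd_poly_ext (m + 1) (fun x => poch (x + c) m * (x + c + INR m))).
  { intro; rewrite Nat.add_1_r; reflexivity. }
  apply fd_poly_mult; [apply IH|].
  apply (fd_poly_ext _ (fun x => x + (c + INR m))); [intro; ring|].
  exact (fd_poly_shift 1 (fun x => x) (c + INR m) fd_poly_id).
Qed.

Definition fdiff (N : nat) (f : R -> R) (s : R) : R :=
  sum_f_R0 (fun t => (-1) ^ t * binom N t * f (INR t + s)) N.

Lemma fdiff_S N f s : fdiff (S N) f s = fdiff N f s - fdiff N f (s + 1).
Proof.
  unfold fdiff at 1. rewrite decomp_sum by lia. simpl pred.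
  rewrite (sum_eq _ (fun j => ((-1) ^ (S j) * binom N (S j) * f (INR (S j) + s))
                            - ((-1) ^ j * binom N j * f (INR j + (s + 1))))).
  2:{ intros j _. simpl binom. rewrite S_INR.
      replace (INR j + 1 + s) with (INR j + (s + 1)) by ring. simpl pow. ring. }
  rewrite minus_sum.
  assert (Hhead : fdiff N f s = binom N 0 * f s
            + sum_f_R0 (fun j => (-1) ^ (S j) * binom N (S j) * f (INR (S j) + s)) N).
  { assert (Hext : fdiff N f s
            = sum_f_R0 (fun t => (-1) ^ t * binom N t * f (INR t + s)) (S N)).
    { unfold fdiff. rewrite tech5, (binom_gt N (S N)) by lia. ring. }
    rewrite Hext, decomp_sum by lia.
    simpl pred. simpl pow. simpl INR. rewrite Rplus_0_l. ring. }
  rewrite Hhead. unfold fdiff.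
  replace (binom N 0) with 1 by (destruct N; reflexivity).
  simpl pow. simpl INR. rewrite Rplus_0_l. simpl binom. ring.
Qed.

Lemma fdiff_step N f s :
  fdiff N f s - fdiff N f (s + 1) = fdiff N (fun x => f x - f (x + 1)) s.
Proof.
  unfold fdiff. rewrite <- minus_sum. apply sum_eq. intros.
  replace (INR i + (s + 1)) with (INR i + s + 1) by ring. ring.
Qed.

Lemma fdiff_ext N f g s : (forall x, f x = g x) -> fdiff N f s = fdiff N g s.
Proof. intros H. unfold fdiff. apply sum_eq. intros. rewrite H. reflexivity. Qed.

Lemma fdiff_poly_zero N : forall d f s, fd_poly d f -> (d < N)%nat -> fdiff N f s = 0.
Proof.
  induction N as [|N IH]; intros d f s Hf Hd; [lia|].
  rewrite fdiff_S, fdiff_step.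
  destruct d as [|d].
  - destruct Hf as [c0 Hc0]. unfold fdiff.
    apply sum_zero. intros. rewrite !Hc0. ring.
  - destruct Hf as [g [Hg Hdg]].
    rewrite (fdiff_ext N _ (fun x => -1 * g x)) by (intro x; rewrite <- Hdg; ring).
    apply (IH d); [apply fd_poly_scal; auto | lia].
Qed.

(* Q_k(y) = (y + 1)_(k-1) = (k-1)! binom(y + k - 1, k - 1), the shape of
   w_l = Q_k(l) / (k-1)! for lam = k. *)
Definition qpoch (k : nat) (y : R) : R := poch (y + 1) (k - 1).

Lemma fd_poly_qpoch_reflect k a : fd_poly (k - 1) (fun z => qpoch k (a - z)).
Proof. exact (fd_poly_reflect (k - 1) (fun y => poch (y + 1) (k - 1)) a (fd_poly_poch (k - 1) 1)). Qed.

Lemma fd_poly_qpoch_shift k a : fd_poly (k - 1) (fun z => qpoch k (a + z)).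
Proof.
  apply (fd_poly_ext (k - 1) (fun z => poch (z + (a + 1)) (k - 1))).
  { intro; unfold qpoch; f_equal; ring. }
  apply fd_poly_poch.
Qed.

(* The i-th term of the sum that makes the off-diagonal entries vanish when
   n >= 1 (p >= 1 is half the distance from m = n + 2p to n). *)
Definition phi_term (k n p i : nat) : R :=
  (-1) ^ i * Binomial.C k i * (INR n + 2 * INR i)
  * qpoch k (INR p - INR i) * qpoch k (INR n + INR p + INR i)
  / poch (INR n + INR i) (k + 1).

(* The polynomial whose (n+2k)-th difference produces the phi_term sum. *)
Definition phi_poly (k n p : nat) (z : R) : R :=
  (2 * z - INR n) * qpoch k (INR n + INR p - z) * qpoch k (INR p + z)
  * poch (z - INR n + 1) (n - 1).

Lemma phi_poly_degree k n p : (1 <= k)%nat -> (1 <= n)%nat ->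
  fd_poly (n + 2 * k - 2) (phi_poly k n p).
Proof.
  intros Hk Hn.
  replace (n + 2 * k - 2)%nat with (1 + (k - 1) + (k - 1) + (n - 1))%nat by lia.
  unfold phi_poly. repeat apply fd_poly_mult.
  - apply (fd_poly_ext 1 (fun x => 2 * x + (- INR n))); [intro; ring|].
    apply fd_poly_plus; [apply (fd_poly_scal 1 (fun x => x)), fd_poly_id | apply fd_poly_const].
  - apply fd_poly_qpoch_reflect.
  - apply fd_poly_qpoch_shift.
  - apply (fd_poly_ext (n - 1) (fun x => poch (x + (- INR n + 1)) (n - 1))).
    { intro; f_equal; ring. }
    apply fd_poly_poch.
Qed.

Definition phi_diff_term (k n p t : nat) : R :=
  (-1) ^ t * binom (n + 2 * k) t * phi_poly k n p (INR t + - INR k).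

(* The common factor relating both halves of the difference to phi_term. *)
Definition phi_scale (k n : nat) : R := (-1) ^ (n + k) * (INR (fact (n + 2 * k)) / INR (fact k)).

(* The upper block of terms, z = n + i. *)
Lemma phi_diff_term_upper k n p i : (1 <= k)%nat -> (1 <= n)%nat -> (i <= k)%nat ->
  phi_diff_term k n p (S k + (n - 1 + i)) = phi_scale k n * phi_term k n p i.
Proof.
  intros Hk Hn Hi. unfold phi_diff_term, phi_poly, phi_term, phi_scale.
  replace (S k + (n - 1 + i))%nat with (n + k + i)%nat by lia.
  replace (INR (n + k + i) + - INR k) with (INR n + INR i) by (rewrite !plus_INR; ring).
  replace (2 * (INR n + INR i) - INR n) with (INR n + 2 * INR i) by ring.
  replace (INR n + INR p - (INR n + INR i)) with (INR p - INR i) by ring.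
  replace (INR p + (INR n + INR i)) with (INR n + INR p + INR i) by ring.
  replace (INR n + INR i - INR n + 1) with (INR i + 1) by ring.
  rewrite poch_fact, binom_fact by lia.
  replace (n + 2 * k - (n + k + i))%nat with (k - i)%nat by lia.
  replace (INR n + INR i) with (INR (n + i - 1) + 1)
    by (rewrite minus_INR, plus_INR by lia; simpl; ring).
  rewrite poch_fact.
  replace (n + i - 1 + (k + 1))%nat with (n + k + i)%nat by lia.
  replace (i + (n - 1))%nat with (n + i - 1)%nat by lia.
  unfold Binomial.C. rewrite !pow_add.
  set (Q1 := qpoch k (INR p - INR i)). set (Q2 := qpoch k (INR n + INR p + INR i)).
  pose proof (INR_fact_pos (n + k + i)). pose proof (INR_fact_pos (k - i)).
  pose proof (INR_fact_pos i). pose proof (INR_fact_pos k). pose proof (INR_fact_pos (n + i - 1)).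
  field. repeat split; lra.
Qed.

(* The lower block of terms, z = -i, gives the same values by reflection. *)
Lemma phi_diff_term_lower k n p i : (1 <= k)%nat -> (1 <= n)%nat -> (i <= k)%nat ->
  phi_diff_term k n p (k - i) = phi_scale k n * phi_term k n p i.
Proof.
  intros Hk Hn Hi. unfold phi_diff_term, phi_poly, phi_term, phi_scale.
  replace (INR (k - i) + - INR k) with (- INR i) by (rewrite minus_INR by lia; ring).
  replace (2 * - INR i - INR n) with (- (INR n + 2 * INR i)) by ring.
  replace (INR n + INR p - - INR i) with (INR n + INR p + INR i) by ring.
  replace (INR p + - INR i) with (INR p - INR i) by ring.
  replace (- INR i - INR n + 1) with (- (INR i + 1) - INR (n - 1) + 1)
    by (rewrite minus_INR by lia; simpl; ring).
  rewrite poch_reflect, poch_fact, binom_fact by lia.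
  replace (n + 2 * k - (k - i))%nat with (n + k + i)%nat by lia.
  replace (INR n + INR i) with (INR (n + i - 1) + 1)
    by (rewrite minus_INR, plus_INR by lia; simpl; ring).
  rewrite poch_fact.
  replace (n + i - 1 + (k + 1))%nat with (n + k + i)%nat by lia.
  replace (i + (n - 1))%nat with (n + i - 1)%nat by lia.
  unfold Binomial.C. rewrite pow_m1_sub, !pow_add by lia.
  replace ((-1) ^ n) with (- (-1) ^ (n - 1)) by (replace n with (S (n - 1)) at 2 by lia; simpl; ring).
  set (Q1 := qpoch k (INR p - INR i)). set (Q2 := qpoch k (INR n + INR p + INR i)).
  pose proof (INR_fact_pos (n + k + i)). pose proof (INR_fact_pos (k - i)).
  pose proof (INR_fact_pos i). pose proof (INR_fact_pos k). pose proof (INR_fact_pos (n + i - 1)).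
  field. repeat split; lra.
Qed.

(* The middle block, 0 < z < n, vanishes through the factor (z - n + 1)_(n-1). *)
Lemma phi_diff_term_middle k n p j : (1 <= k)%nat -> (1 <= n)%nat -> (j < n - 1)%nat ->
  phi_diff_term k n p (S k + j) = 0.
Proof.
  intros Hk Hn Hj. unfold phi_diff_term, phi_poly.
  rewrite (poch_root (n - 1) _ (n - 2 - j)); [ring|lia|].
  rewrite !minus_INR, !plus_INR, S_INR by lia. simpl. ring.
Qed.

Lemma phi_sum_zero k n p : (1 <= k)%nat -> (1 <= n)%nat ->
  sum_f_R0 (phi_term k n p) k = 0.
Proof.
  intros Hk Hn.
  assert (Hdiff : fdiff (n + 2 * k) (phi_poly k n p) (- INR k) = 0).
  { apply (fdiff_poly_zero _ (n + 2 * k - 2)); [apply phi_poly_degree; auto | lia]. }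
  change (sum_f_R0 (phi_diff_term k n p) (n + 2 * k) = 0) in Hdiff.
  replace (n + 2 * k)%nat with (k + S (n - 1 + k))%nat in Hdiff by lia.
  rewrite sum_split, sum_skip, sum_rev in Hdiff
    by (intros; apply phi_diff_term_middle; auto).
  rewrite (sum_eq _ (fun i => phi_scale k n * phi_term k n p i)) in Hdiff
    by (intros; apply phi_diff_term_lower; auto).
  rewrite (sum_eq (fun i => phi_diff_term k n p (S k + (n - 1 + i)))
                  (fun i => phi_scale k n * phi_term k n p i)) in Hdiff
    by (intros; apply phi_diff_term_upper; auto).
  rewrite sum_scal_l in Hdiff.
  assert (Hscale : phi_scale k n <> 0).
  { unfold phi_scale. apply Rmult_integral_contrapositive. split; [apply pow_nonzero; lra|].
    pose proof (INR_fact_pos (n + 2 * k)). pose proof (INR_fact_pos k).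
    apply Rgt_not_eq, Rdiv_lt_0_compat; auto. }
  apply (Rmult_eq_reg_l (phi_scale k n)); [lra | exact Hscale].
Qed.

(* The analogous term for n = 0 (no middle block, and the two halves of the
   difference overlap at z = 0). *)
Definition psi_term (k p i : nat) : R :=
  (-1) ^ i / (INR (fact (k - i)) * INR (fact (k + i)))
  * qpoch k (INR p - INR i) * qpoch k (INR p + INR i).

Definition psi_poly (k p : nat) (z : R) : R := qpoch k (INR p - z) * qpoch k (INR p + z).

Lemma psi_poly_degree k p : (1 <= k)%nat -> fd_poly (2 * k - 2) (psi_poly k p).
Proof.
  intros Hk. replace (2 * k - 2)%nat with ((k - 1) + (k - 1))%nat by lia.
  apply fd_poly_mult; [apply fd_poly_qpoch_reflect | apply fd_poly_qpoch_shift].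
Qed.

Lemma psi_sum_zero k p : (1 <= k)%nat ->
  psi_term k p 0 + 2 * sum_f_R0 (fun j => psi_term k p (S j)) (k - 1) = 0.
Proof.
  intros Hk.
  assert (Hdiff : fdiff (2 * k) (psi_poly k p) (- INR k) = 0).
  { apply (fdiff_poly_zero _ (2 * k - 2)); [apply psi_poly_degree; auto | lia]. }
  unfold fdiff in Hdiff.
  set (T := fun t => (-1) ^ t * binom (2 * k) t * psi_poly k p (INR t + - INR k)) in Hdiff.
  replace (2 * k)%nat with (k + S (k - 1))%nat in Hdiff by lia.
  rewrite sum_split, sum_rev in Hdiff.
  set (c := (-1) ^ k * INR (fact (2 * k))).
  assert (Hlower : forall i, (i <= k)%nat -> T (k - i)%nat = c * psi_term k p i).
  { intros i Hi. unfold T, psi_poly, psi_term, c.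
    replace (INR (k - i) + - INR k) with (- INR i) by (rewrite minus_INR by lia; ring).
    rewrite binom_fact, pow_m1_sub by lia.
    replace (2 * k - (k - i))%nat with (k + i)%nat by lia.
    replace (INR p - - INR i) with (INR p + INR i) by ring.
    replace (INR p + - INR i) with (INR p - INR i) by ring.
    pose proof (INR_fact_pos (k - i)). pose proof (INR_fact_pos (k + i)).
    field. lra. }
  assert (Hupper : forall j, (j <= k - 1)%nat -> T (S k + j)%nat = c * psi_term k p (S j)).
  { intros j Hj. unfold T, psi_poly, psi_term, c.
    replace (INR (S k + j) + - INR k) with (INR (S j)) by (rewrite S_INR, plus_INR, S_INR; ring).
    rewrite binom_fact by lia.
    replace (2 * k - (S k + j))%nat with (k - S j)%nat by lia.
    replace (S k + j)%nat with (k + S j)%nat by lia.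
    rewrite pow_add.
    pose proof (INR_fact_pos (k - S j)). pose proof (INR_fact_pos (k + S j)).
    field. lra. }
  rewrite (sum_eq _ _ k Hlower), (sum_eq _ _ (k - 1) Hupper), !sum_scal_l in Hdiff.
  rewrite (decomp_sum _ k) in Hdiff by lia.
  replace (pred k) with (k - 1)%nat in Hdiff by lia.
  assert (Hc : c <> 0).
  { unfold c. apply Rmult_integral_contrapositive.
    split; [apply pow_nonzero; lra | apply Rgt_not_eq, INR_fact_pos]. }
  apply (Rmult_eq_reg_l c); [|exact Hc]. rewrite Rmult_0_r, <- Hdiff. ring.
Qed.

Definition acoef_scale (n k : nat) : R :=
  (INR n + INR k) * poch (INR n + 1) (2 * k - 1) / (2 ^ k * dfact_odd k).

Lemma acoef_pos_n i n k : (1 <= n)%nat ->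
  acoef i n k = acoef_scale n k
    * ((-1) ^ i * Binomial.C k i * (INR n + 2 * INR i) / poch (INR n + INR i) (k + 1)).
Proof.
  intros Hn. unfold acoef, acoef_scale.
  assert (0 < poch (INR n + INR i) (k + 1)).
  { apply poch_pos. pose proof (pos_INR i). pose proof (INR_ge_1 n Hn). lra. }
  pose proof (dfact_odd_pos k). pose proof (pow_lt 2 k ltac:(lra)).
  destruct i, n; try lia; field; repeat split; lra.
Qed.

Lemma acoef_zero_n i k : (1 <= k)%nat -> (i <= k)%nat ->
  acoef i 0 k = INR (fact k) * INR (fact k) * ((-1) ^ i / (INR (fact (k - i)) * INR (fact (k + i)))).
Proof.
  intros Hk Hi.
  pose proof (INR_fact_pos k). pose proof (INR_fact_pos (k - i)). pose proof (INR_fact_pos (k + i)).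
  pose proof (dfact_odd_pos k). pose proof (pow_lt 2 k ltac:(lra)). pose proof (INR_ge_1 k Hk).
  destruct i as [|i].
  - simpl. rewrite Nat.add_0_r, Nat.sub_0_r. field. lra.
  - unfold acoef, Binomial.C.
    rewrite (poch_fact 0), Nat.add_0_l.
    replace (INR 0 + INR (S i)) with (INR i + 1) by (rewrite S_INR; simpl; ring).
    rewrite poch_fact.
    replace (i + (k + 1))%nat with (k + S i)%nat by lia.
    rewrite (fact_2k_pred k Hk), INR_fact_S, S_INR.
    simpl (fact 0). simpl (INR 0). simpl (INR 1).
    pose proof (INR_fact_pos i). pose proof (pos_INR i).
    field. repeat split; lra.
Qed.

Lemma acoef_diag n k : (1 <= k)%nat -> (1 <= n)%nat ->
  2 * acoef 0 n k * gcoef (INR k) n = gegen_one (INR k) n.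
Proof.
  intros Hk Hn. rewrite acoef_pos_n by auto. unfold acoef_scale, gegen_one, gcoef.
  rewrite (poch_fact n).
  replace (INR n + INR 0) with (INR (n - 1) + 1) by (rewrite minus_INR by lia; simpl; ring).
  rewrite (poch_fact (n - 1)).
  replace (INR k) with (INR (k - 1) + 1) at 2 by (rewrite minus_INR by lia; simpl; ring).
  rewrite (poch_fact (k - 1)).
  replace (2 * INR k) with (INR (2 * k - 1) + 1)
    by (rewrite minus_INR, mult_INR by lia; simpl; ring).
  rewrite (poch_fact (2 * k - 1)).
  replace (n + (2 * k - 1))%nat with (2 * k - 1 + n)%nat by lia.
  replace (n - 1 + (k + 1))%nat with (S (k - 1 + n)) by lia.
  rewrite (fact_2k_pred k Hk), INR_fact_S, (INR_fact_pred n Hn), (INR_fact_pred k Hk).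
  rewrite plus_INR, minus_INR by lia. simpl (INR 0). simpl (INR 1).
  replace (Binomial.C k 0) with 1 by (unfold Binomial.C; rewrite Nat.sub_0_r; simpl; field; apply INR_fact_neq_0).
  pose proof (INR_fact_pos (k - 1)). pose proof (INR_fact_pos (n - 1)).
  pose proof (INR_fact_pos (k - 1 + n)). pose proof (INR_fact_pos (2 * k - 1 + n)).
  pose proof (dfact_odd_pos k). pose proof (pow_lt 2 k ltac:(lra)).
  pose proof (INR_ge_1 k Hk). pose proof (INR_ge_1 n Hn).
  field. repeat split; lra.
Qed.

Definition zdelta (z : Z) : R := if Z.eqb z 0 then 1 else 0.

(* ecoef k m q is the q-th cosine coefficient of C_m^k(cos th) / C_m^k(1):
   the product formula cos a cos b = (cos(a+b) + cos(a-b))/2 and the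
   orthogonality of cosines on [0, pi] give
     int_0^pi C_m^k(cos th)/C_m^k(1) cos(q th) = (pi/2)(zdelta(2q) + 1) ecoef k m q. *)
Definition ecoef (k m q : nat) : R :=
  sum_f_R0 (fun l => gcoef (INR k) l * gcoef (INR k) (m - l) *
     (zdelta (Z.of_nat m - 2 * Z.of_nat l + Z.of_nat q)
      + zdelta (Z.of_nat m - 2 * Z.of_nat l - Z.of_nat q))) m
  / (gegen_one (INR k) m * (zdelta (2 * Z.of_nat q) + 1)).

Lemma zdelta_2q_pos q : (1 <= q)%nat -> zdelta (2 * Z.of_nat q) = 0.
Proof. intros. unfold zdelta. destruct (Z.eqb_spec (2 * Z.of_nat q) 0); [lia|reflexivity]. Qed.

Lemma sum_zdelta (u : nat -> R) m (c : Z) l0 : (l0 <= m)%nat -> c = (2 * Z.of_nat l0)%Z ->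
  sum_f_R0 (fun l => u l * zdelta (c - 2 * Z.of_nat l)) m = u l0.
Proof.
  intros Hl Hc. rewrite (sum_single _ m l0 Hl).
  - unfold zdelta. replace (c - 2 * Z.of_nat l0)%Z with 0%Z by lia. simpl. ring.
  - intros l _ Hne. unfold zdelta. destruct (Z.eqb_spec (c - 2 * Z.of_nat l) 0); [lia|ring].
Qed.

Lemma sum_zdelta_none (u : nat -> R) m (c : Z) :
  (forall l, (l <= m)%nat -> c <> (2 * Z.of_nat l)%Z) ->
  sum_f_R0 (fun l => u l * zdelta (c - 2 * Z.of_nat l)) m = 0.
Proof.
  intros H. apply sum_zero. intros l Hl. unfold zdelta.
  destruct (Z.eqb_spec (c - 2 * Z.of_nat l) 0); [exfalso; apply (H l Hl); lia | ring].
Qed.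

Lemma ecoef_numerator_split k m q :
  sum_f_R0 (fun l => gcoef (INR k) l * gcoef (INR k) (m - l) *
     (zdelta (Z.of_nat m - 2 * Z.of_nat l + Z.of_nat q)
      + zdelta (Z.of_nat m - 2 * Z.of_nat l - Z.of_nat q))) m
  = sum_f_R0 (fun l => (gcoef (INR k) l * gcoef (INR k) (m - l))
                       * zdelta ((Z.of_nat m + Z.of_nat q) - 2 * Z.of_nat l)) m
  + sum_f_R0 (fun l => (gcoef (INR k) l * gcoef (INR k) (m - l))
                       * zdelta ((Z.of_nat m - Z.of_nat q) - 2 * Z.of_nat l)) m.
Proof.
  rewrite <- plus_sum. apply sum_eq. intros l _.
  replace (Z.of_nat m - 2 * Z.of_nat l + Z.of_nat q)%Z
    with (Z.of_nat m + Z.of_nat q - 2 * Z.of_nat l)%Z by lia.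
  replace (Z.of_nat m - 2 * Z.of_nat l - Z.of_nat q)%Z
    with (Z.of_nat m - Z.of_nat q - 2 * Z.of_nat l)%Z by lia.
  ring.
Qed.

Lemma ecoef_shift k n p i :
  ecoef k (n + 2 * p) (n + 2 * i) =
  (if le_dec i p then 2 * gcoef (INR k) (p - i) * gcoef (INR k) (n + p + i) else 0)
  / (gegen_one (INR k) (n + 2 * p) * (zdelta (2 * Z.of_nat (n + 2 * i)) + 1)).
Proof.
  unfold ecoef. rewrite ecoef_numerator_split. f_equal.
  destruct (le_dec i p) as [Hip|Hip].
  - rewrite (sum_zdelta _ _ _ (n + p + i)), (sum_zdelta _ _ _ (p - i)) by lia.
    replace (n + 2 * p - (n + p + i))%nat with (p - i)%nat by lia.
    replace (n + 2 * p - (p - i))%nat with (n + p + i)%nat by lia. ring.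
  - rewrite !sum_zdelta_none by (intros; lia). ring.
Qed.

Lemma ecoef_off k m q :
  (forall l, (l <= m)%nat -> (Z.of_nat m + Z.of_nat q <> 2 * Z.of_nat l)%Z /\
                             (Z.of_nat m - Z.of_nat q <> 2 * Z.of_nat l)%Z) ->
  ecoef k m q = 0.
Proof.
  intros H. unfold ecoef. rewrite ecoef_numerator_split, !sum_zdelta_none.
  - unfold Rdiv. ring.
  - intros l Hl; apply H; auto.
  - intros l Hl; apply H; auto.
Qed.

(** * Biorthogonality of a(n,k) and the cosine coefficients *)

Lemma gcoef_qpoch k l : (1 <= k)%nat -> gcoef (INR k) l = qpoch k (INR l) / INR (fact (k - 1)).
Proof.
  intros Hk. unfold gcoef, qpoch.
  replace (INR k) with (INR (k - 1) + 1) by (rewrite minus_INR by lia; simpl; ring).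
  rewrite !poch_fact. replace (l + (k - 1))%nat with (k - 1 + l)%nat by lia.
  pose proof (INR_fact_pos l). pose proof (INR_fact_pos (k - 1)).
  field. lra.
Qed.

Lemma qpoch_neg_root k p i : (1 <= p)%nat -> (p < i)%nat -> (i <= k)%nat -> qpoch k (INR p - INR i) = 0.
Proof.
  intros Hp Hpi Hik. unfold qpoch. apply (poch_root _ _ (i - p - 1)); [lia|].
  rewrite !minus_INR by lia. simpl. ring.
Qed.

(* The numerators of ecoef_shift in terms of qpoch (the condition i <= p is
   absorbed by the roots of qpoch). *)
Lemma ecoef_shift_numerator k n p i : (1 <= k)%nat -> (1 <= p)%nat -> (i <= k)%nat ->
  (if le_dec i p then 2 * gcoef (INR k) (p - i) * gcoef (INR k) (n + p + i) else 0)
  = 2 * (qpoch k (INR p - INR i) * qpoch k (INR n + INR p + INR i))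
    / (INR (fact (k - 1)) * INR (fact (k - 1))).
Proof.
  intros Hk Hp Hi. pose proof (INR_fact_pos (k - 1)).
  destruct (le_dec i p) as [Hip|Hip].
  - rewrite !gcoef_qpoch, minus_INR, !plus_INR by lia. field. lra.
  - rewrite qpoch_neg_root by lia. field. lra.
Qed.

Lemma biorth_diag k n : (1 <= k)%nat ->
  sum_f_R0 (fun i => acoef i n k * ecoef k n (n + 2 * i)) k = 1.
Proof.
  intros Hk. pose proof (gegen_one_pos k n Hk).
  assert (Hrow : forall q, ecoef k n q = ecoef k (n + 2 * 0) q)
    by (intro; rewrite Nat.mul_0_r, Nat.add_0_r; reflexivity).
  rewrite decomp_sum by lia. simpl pred.
  rewrite sum_zero.
  2:{ intros i _. rewrite Hrow, ecoef_shift.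
      destruct (le_dec (S i) 0); [lia | unfold Rdiv; ring]. }
  rewrite Hrow, ecoef_shift, Nat.mul_0_r, !Nat.add_0_r, Nat.sub_0_r, gcoef_0.
  destruct (le_dec 0 0) as [_|]; [|lia].
  destruct n as [|n].
  - rewrite gcoef_0. unfold zdelta, gegen_one. simpl. field.
  - rewrite zdelta_2q_pos by lia.
    pose proof (acoef_diag (S n) k Hk ltac:(lia)) as Hdiag.
    replace (acoef 0 (S n) k * (2 * 1 * gcoef (INR k) (S n) / (gegen_one (INR k) (S n) * (0 + 1))) + 0)
      with (2 * acoef 0 (S n) k * gcoef (INR k) (S n) / gegen_one (INR k) (S n)) by (field; lra).
    rewrite Hdiag. field. lra.
Qed.

Lemma biorth_off_zero_n k p : (1 <= k)%nat -> (1 <= p)%nat ->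
  sum_f_R0 (fun i => acoef i 0 k * ecoef k (0 + 2 * p) (0 + 2 * i)) k = 0.
Proof.
  intros Hk Hp. pose proof (INR_fact_pos (k - 1)).
  pose proof (gegen_one_pos k (0 + 2 * p) Hk).
  set (c := INR (fact k) * INR (fact k)
            / (INR (fact (k - 1)) * INR (fact (k - 1)) * gegen_one (INR k) (0 + 2 * p))).
  rewrite (sum_eq _ (fun i => c * ((if Nat.eq_dec i 0 then 1 else 2) * psi_term k p i))).
  2:{ intros i Hi. rewrite ecoef_shift, ecoef_shift_numerator, acoef_zero_n by auto.
      unfold c, psi_term.
      pose proof (INR_fact_pos (k - i)). pose proof (INR_fact_pos (k + i)).
      change (INR 0) with 0. rewrite !Rplus_0_l.
      destruct (Nat.eq_dec i 0) as [->|Hi0].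
      - change (zdelta (2 * Z.of_nat (0 + 2 * 0))) with 1. rewrite Rplus_0_r.
        field. repeat split; lra.
      - rewrite zdelta_2q_pos by lia. field. repeat split; lra. }
  rewrite sum_scal_l, (decomp_sum _ k) by lia.
  replace (pred k) with (k - 1)%nat by lia.
  rewrite (sum_eq _ (fun j => 2 * psi_term k p (S j))) by (intros j _; reflexivity).
  rewrite sum_scal_l. simpl. rewrite Rmult_1_l, psi_sum_zero by exact Hk. ring.
Qed.

Lemma biorth_off_pos_n k n p : (1 <= k)%nat -> (1 <= n)%nat -> (1 <= p)%nat ->
  sum_f_R0 (fun i => acoef i n k * ecoef k (n + 2 * p) (n + 2 * i)) k = 0.
Proof.
  intros Hk Hn Hp. pose proof (INR_fact_pos (k - 1)).
  pose proof (gegen_one_pos k (n + 2 * p) Hk).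
  set (c := 2 * acoef_scale n k
            / (INR (fact (k - 1)) * INR (fact (k - 1)) * gegen_one (INR k) (n + 2 * p))).
  rewrite (sum_eq _ (fun i => c * phi_term k n p i)).
  2:{ intros i Hi. rewrite ecoef_shift, ecoef_shift_numerator, acoef_pos_n, zdelta_2q_pos by lia.
      unfold c, phi_term.
      assert (0 < poch (INR n + INR i) (k + 1)).
      { apply poch_pos. pose proof (pos_INR i). pose proof (INR_ge_1 n Hn). lra. }
      field. repeat split; lra. }
  rewrite sum_scal_l, phi_sum_zero by assumption. ring.
Qed.

Lemma biorth k n m : (1 <= k)%nat ->
  sum_f_R0 (fun i => acoef i n k * ecoef k m (n + 2 * i)) k = if Nat.eq_dec m n then 1 else 0.
Proof.
  intros Hk.
  destruct (le_lt_dec n m) as [Hnm|Hnm];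
    [destruct (Nat.Even_or_Odd (m - n)) as [[p Hp]|[p Hp]]|].
  - replace m with (n + 2 * p)%nat by lia.
    destruct (Nat.eq_dec (n + 2 * p) n) as [Hp0|Hp0].
    + replace p with 0%nat by lia. rewrite Nat.mul_0_r, Nat.add_0_r. apply biorth_diag, Hk.
    + destruct n as [|n].
      * apply biorth_off_zero_n; [exact Hk | lia].
      * apply biorth_off_pos_n; [exact Hk | lia | lia].
  - destruct (Nat.eq_dec m n); [lia|].
    apply sum_zero. intros i _. rewrite ecoef_off; [ring|]. intros l Hl. split; lia.
  - destruct (Nat.eq_dec m n); [lia|].
    apply sum_zero. intros i _. rewrite ecoef_off; [ring|]. intros l Hl. split; lia.
Qed.

Lemma RInt_cos (z : Z) :
  is_RInt (fun t => cos (IZR z * t)) 0 PI (PI * zdelta z).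
Proof.
  unfold zdelta. destruct (Z.eqb_spec z 0) as [->|Hz].
  - assert (Hc := is_RInt_const 0 PI 1).
    match type of Hc with is_RInt _ _ _ ?v =>
      replace v with (PI * 1) in Hc by (unfold scal; simpl; unfold mult; simpl; ring) end.
    eapply is_RInt_ext; [|exact Hc].
    intros x _. simpl. rewrite Rmult_0_l, cos_0. reflexivity.
  - assert (Hz' : IZR z <> 0) by (apply not_0_IZR; exact Hz).
    replace (PI * 0) with (minus (sin (IZR z * PI) / IZR z) (sin (IZR z * 0) / IZR z)).
    2:{ rewrite sin_eq_0_1 by (exists z; reflexivity).
        rewrite Rmult_0_r, sin_0. unfold minus, plus, opp; simpl. field. exact Hz'. }
    apply (is_RInt_derive (fun t => sin (IZR z * t) / IZR z)).
    + intros x _. auto_derive; [exact I|]. field. exact Hz'.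
    + intros x _. apply (@ex_derive_continuous R_AbsRing R_NormedModule (fun t => cos (IZR z * t))).
      auto_derive. exact I.
Qed.

Lemma RInt_cos_cos (z1 z2 : Z) :
  is_RInt (fun t => cos (IZR z1 * t) * cos (IZR z2 * t)) 0 PI
    (PI / 2 * (zdelta (z1 + z2) + zdelta (z1 - z2))).
Proof.
  assert (H := is_RInt_scal _ 0 PI (/2) _
                 (is_RInt_plus _ _ 0 PI _ _ (RInt_cos (z1 + z2)) (RInt_cos (z1 - z2)))).
  match type of H with is_RInt _ _ _ ?v =>
    replace v with (PI / 2 * (zdelta (z1 + z2) + zdelta (z1 - z2))) in H
      by (unfold scal, plus; simpl; unfold mult; simpl; field) end.
  eapply is_RInt_ext; [|exact H].
  intros x _. unfold scal, plus; simpl. unfold mult; simpl.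
  rewrite plus_IZR, minus_IZR.
  replace ((IZR z1 + IZR z2) * x) with (IZR z1 * x + IZR z2 * x) by ring.
  replace ((IZR z1 - IZR z2) * x) with (IZR z1 * x - IZR z2 * x) by ring.
  rewrite cos_plus, cos_minus. field.
Qed.

Lemma is_RInt_sum (f : nat -> R -> R) (v : nat -> R) a b m :
  (forall l, (l <= m)%nat -> is_RInt (f l) a b (v l)) ->
  is_RInt (fun t => sum_f_R0 (fun l => f l t) m) a b (sum_f_R0 v m).
Proof.
  induction m as [|m IH]; intros H; simpl; [apply H; lia|].
  apply (is_RInt_plus _ _ a b _ _ (IH ltac:(intros; apply H; lia)) (H (S m) ltac:(lia))).
Qed.

(* int_0^pi cos(q th)^2 = (pi/2)(zdelta(2q) + 1). *)
Definition cos_sq_int (q : nat) : R := PI / 2 * (zdelta (2 * Z.of_nat q) + 1).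

Lemma cos_sq_int_pos q : 0 < cos_sq_int q.
Proof.
  unfold cos_sq_int. pose proof PI_RGT_0.
  assert (0 < zdelta (2 * Z.of_nat q) + 1) by (unfold zdelta; destruct (Z.eqb _ _); lra).
  apply Rmult_lt_0_compat; lra.
Qed.

Lemma RInt_gegen_cos k m q : (1 <= k)%nat ->
  is_RInt (fun t => gegen_cos (INR k) t m / gegen_one (INR k) m * cos (INR q * t)) 0 PI
    (cos_sq_int q * ecoef k m q).
Proof.
  intros Hk. pose proof (gegen_one_pos k m Hk) as Hone.
  set (W := fun l => gcoef (INR k) l * gcoef (INR k) (m - l) / gegen_one (INR k) m).
  set (z := fun l => (Z.of_nat m - 2 * Z.of_nat l)%Z).
  assert (Hsum : is_RInt
    (fun t => sum_f_R0 (fun l => W l * (cos (IZR (z l) * t) * cos (IZR (Z.of_nat q) * t))) m) 0 PI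
    (sum_f_R0 (fun l => W l * (PI / 2 * (zdelta (z l + Z.of_nat q) + zdelta (z l - Z.of_nat q)))) m)).
  { apply is_RInt_sum. intros l _. apply (is_RInt_scal _ _ _ (W l) _ (RInt_cos_cos _ _)). }
  match type of Hsum with is_RInt _ _ _ ?v => replace v with (cos_sq_int q * ecoef k m q) in Hsum end.
  - eapply is_RInt_ext; [|exact Hsum].
    intros x _. unfold gegen_cos, Rdiv.
    rewrite Rmult_assoc, (Rmult_comm (sum_f_R0 _ m)), <- sum_scal_l.
    apply sum_eq. intros l _. unfold W, z.
    rewrite minus_IZR, mult_IZR, <- !INR_IZR_INZ. simpl. field. lra.
  - unfold ecoef, cos_sq_int. 
    rewrite (sum_eq (fun l => W l * (PI / 2 * (zdelta (z l + Z.of_nat q) + zdelta (z l - Z.of_nat q))))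
                    (fun l => (PI / 2 / gegen_one (INR k) m)
                 * (gcoef (INR k) l * gcoef (INR k) (m - l)
                    * (zdelta (z l + Z.of_nat q) + zdelta (z l - Z.of_nat q)))))
      by (intros; unfold W; field; lra).
    rewrite sum_scal_l.
    assert (0 < zdelta (2 * Z.of_nat q) + 1) by (unfold zdelta; destruct (Z.eqb _ _); lra).
    unfold z. field. lra.
Qed.

Lemma inf_scal (u : nat -> R) l c : infinite_sum u l -> infinite_sum (fun j => c * u j) (c * l).
Proof.
  intros H. unfold infinite_sum.
  apply (Un_cv_ext (fun N => c * sum_f_R0 u N)); [intro; symmetry; apply sum_scal_l|].
  apply (CV_mult (fun _ => c) _ c l); [|exact H].
  intros eps He. exists 0%nat. intros. unfold Rdist. rewrite Rminus_diag, Rabs_R0. lra.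
Qed.

Lemma inf_plus (u v : nat -> R) l1 l2 : infinite_sum u l1 -> infinite_sum v l2 ->
  infinite_sum (fun j => u j + v j) (l1 + l2).
Proof.
  intros H1 H2. unfold infinite_sum.
  apply (Un_cv_ext (fun N => sum_f_R0 u N + sum_f_R0 v N)); [intro; symmetry; apply plus_sum|].
  apply CV_plus; auto.
Qed.

Lemma inf_ext (u v : nat -> R) l : (forall n, u n = v n) -> infinite_sum u l -> infinite_sum v l.
Proof.
  intros H Hu. apply (Un_cv_ext (sum_f_R0 u)); [|exact Hu].
  intro N. apply sum_eq. auto.
Qed.

Lemma inf_lincomb (K : nat) (c : nat -> R) (u : nat -> nat -> R) (l : nat -> R) :
  (forall i, (i <= K)%nat -> infinite_sum (u i) (l i)) ->
  infinite_sum (fun m => sum_f_R0 (fun i => c i * u i m) K) (sum_f_R0 (fun i => c i * l i) K).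
Proof.
  induction K as [|K IH]; intros H; simpl.
  - apply inf_scal, H. lia.
  - apply inf_plus; [apply IH; intros; apply H; lia | apply inf_scal, H; lia].
Qed.

Lemma inf_single (u : nat -> R) q : (forall j, j <> q -> u j = 0) -> infinite_sum u (u q).
Proof.
  intros H eps He. exists q. intros n Hn. unfold Rdist.
  rewrite (sum_single u n q) by (auto; lia). rewrite Rminus_diag, Rabs_R0. lra.
Qed.

(** * Term-by-term integration of uniformly convergent series *)

Lemma cv_closed_bound (u : nat -> R) L a B M :
  Un_cv u L -> (forall K, (K >= M)%nat -> Rabs (u K - a) <= B) -> Rabs (L - a) <= B.
Proof.
  intros Hu Hb. destruct (Rle_dec (Rabs (L - a)) B) as [|Hn]; auto.
  exfalso. apply Rnot_le_lt in Hn.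
  destruct (Hu (Rabs (L - a) - B)) as [N HN]; [lra|].
  specialize (HN (max N M) ltac:(lia)). specialize (Hb (max N M) ltac:(lia)).
  unfold Rdist in HN. rewrite <- Rabs_Ropp in HN.
  pose proof (Rabs_triang (L - u (max N M)) (u (max N M) - a)).
  replace (L - u (max N M) + (u (max N M) - a)) with (L - a) in H by ring.
  replace (- (u (max N M) - L)) with (L - u (max N M)) in HN by ring.
  lra.
Qed.

Lemma partial_diff_bound (v : nat -> R) (g : nat -> R) M d :
  (forall n, 0 <= v n) -> (forall n, Rabs (g n) <= 1) ->
  Rabs (sum_f_R0 (fun n => v n * g n) (M + d) - sum_f_R0 (fun n => v n * g n) M)
    <= sum_f_R0 v (M + d) - sum_f_R0 v M.
Proof.
  intros Hv Hg. induction d as [|d IH].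
  - rewrite Nat.add_0_r. unfold Rminus. rewrite !Rplus_opp_r, Rabs_R0. lra.
  - rewrite Nat.add_succ_r, !tech5.
    set (n := S (M + d)).
    replace (sum_f_R0 (fun n => v n * g n) (M + d) + v n * g n - sum_f_R0 (fun n => v n * g n) M)
      with ((sum_f_R0 (fun n => v n * g n) (M + d) - sum_f_R0 (fun n => v n * g n) M) + v n * g n)
      by ring.
    eapply Rle_trans; [apply Rabs_triang|].
    rewrite Rabs_mult, (Rabs_right (v _)) by (apply Rle_ge, Hv).
    pose proof (Hg n). pose proof (Hv n).
    assert (v n * Rabs (g n) <= v n).
    { rewrite <- (Rmult_1_r (v n)) at 2. apply Rmult_le_compat_l; auto. }
    lra.
Qed.

Lemma tail_bound (v : nat -> R) s (g : nat -> R) L M :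
  (forall n, 0 <= v n) -> (forall n, Rabs (g n) <= 1) -> infinite_sum v s ->
  infinite_sum (fun n => v n * g n) L ->
  Rabs (L - sum_f_R0 (fun n => v n * g n) M) <= s - sum_f_R0 v M.
Proof.
  intros Hv Hg Hs HL.
  apply (cv_closed_bound _ _ _ _ M HL).
  intros K HK. replace K with (M + (K - M))%nat by lia.
  eapply Rle_trans; [apply partial_diff_bound; auto|].
  assert (sum_f_R0 v (M + (K - M)) <= s).
  { apply (growing_ineq (sum_f_R0 v)); [|exact Hs].
    intro n. rewrite tech5. pose proof (Hv (S n)). lra. }
  lra.
Qed.

(* Uniform convergence in Coquelicot is on the whole real line; functions
   on [0, pi] are extended through this retraction. *)
Definition clamp (t : R) : R := Rmax 0 (Rmin PI t).

Lemma clamp_in t : 0 <= clamp t <= PI.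
Proof.
  unfold clamp. pose proof PI_RGT_0. split.
  - apply Rmax_l.
  - apply Rmax_lub; [lra | apply Rmin_l].
Qed.

Lemma clamp_id t : 0 <= t <= PI -> clamp t = t.
Proof.
  intros [H1 H2]. unfold clamp. rewrite Rmin_right, Rmax_right by lra. reflexivity.
Qed.

Lemma RInt_partial_sums (v : nat -> R) (f : nat -> R -> R) (h : R -> R) (I : nat -> R) M :
  (forall n, is_RInt (fun t => f n t * h t) 0 PI (I n)) ->
  is_RInt (fun t => sum_f_R0 (fun n => v n * f n t) M * h t) 0 PI
          (sum_f_R0 (fun n => v n * I n) M).
Proof.
  intros HI.
  eapply is_RInt_ext;
    [|apply (is_RInt_sum (fun n t => v n * (f n t * h t))); intros n _; apply (is_RInt_scal _ _ _ _ _ (HI n))].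
  intros x _. rewrite Rmult_comm, <- sum_scal_l. apply sum_eq. intros; simpl; unfold mult; simpl. ring.
Qed.

Lemma series_unif_cv (v : nat -> R) (s : R) (f : nat -> R -> R) (h F : R -> R) :
  (forall n, 0 <= v n) -> infinite_sum v s ->
  (forall n t, 0 <= t <= PI -> Rabs (f n t) <= 1) ->
  (forall t, 0 <= t <= PI -> Rabs (h t) <= 1) ->
  (forall t, 0 <= t <= PI -> infinite_sum (fun n => v n * f n t) (F t)) ->
  filterlim (fun M t => sum_f_R0 (fun n => v n * f n (clamp t)) M * h (clamp t)) eventually
    (@locally (fct_UniformSpace R R_CompleteNormedModule) (fun t => F (clamp t) * h (clamp t))).
Proof.
  intros Hv Hs Hf Hh HF P [eps Heps].
  assert (He2 : eps / 2 > 0) by (destruct eps; simpl; lra).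
  destruct (Hs (eps / 2) He2) as [N HN].
  exists N. intros M HM. apply Heps. intro t.
  unfold ball; simpl. unfold AbsRing_ball, abs, minus, plus, opp; simpl.
  pose proof (clamp_in t) as Hc. set (c := clamp t) in *.
  set (S := sum_f_R0 (fun n => v n * f n c) M).
  pose proof (tail_bound v s (fun n => f n c) (F c) M Hv (fun n => Hf n c Hc) Hs (HF c Hc)) as Ht.
  cbv beta in Ht. fold S in Ht.
  specialize (HN M ltac:(lia)). unfold Rdist in HN.
  replace (S * h c + - (F c * h c)) with (- (F c - S) * h c) by ring.
  rewrite Rabs_mult, Rabs_Ropp.
  pose proof (Hh c Hc). pose proof (Rabs_pos (h c)). pose proof (Rabs_pos (F c - S)).
  assert (Rabs (F c - S) * Rabs (h c) <= Rabs (F c - S)).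
  { rewrite <- (Rmult_1_r (Rabs (F c - S))) at 2. apply Rmult_le_compat_l; auto. }
  assert (s - sum_f_R0 v M <= Rabs (sum_f_R0 v M - s)).
  { rewrite <- Rabs_Ropp. replace (- (sum_f_R0 v M - s)) with (s - sum_f_R0 v M) by ring.
    apply Rle_abs. }
  destruct eps; simpl in *. lra.
Qed.

Lemma series_RInt (v : nat -> R) (s : R) (f : nat -> R -> R) (h F : R -> R) (I : nat -> R) :
  (forall n, 0 <= v n) -> infinite_sum v s ->
  (forall n t, 0 <= t <= PI -> Rabs (f n t) <= 1) ->
  (forall t, 0 <= t <= PI -> Rabs (h t) <= 1) ->
  (forall n, is_RInt (fun t => f n t * h t) 0 PI (I n)) ->
  (forall t, 0 <= t <= PI -> infinite_sum (fun n => v n * f n t) (F t)) ->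
  exists J, is_RInt (fun t => F t * h t) 0 PI J /\ infinite_sum (fun n => v n * I n) J.
Proof.
  intros Hv Hs Hf Hh HI HF. pose proof PI_RGT_0.
  assert (HIM : forall M, is_RInt (fun t => sum_f_R0 (fun n => v n * f n (clamp t)) M * h (clamp t))
                                  0 PI (sum_f_R0 (fun n => v n * I n) M)).
  { intro M. eapply is_RInt_ext; [|apply RInt_partial_sums, HI].
    intros x Hx. rewrite Rmin_left, Rmax_right in Hx by lra.
    rewrite clamp_id by lra. reflexivity. }
  destruct (filterlim_RInt _ 0 PI eventually eventually_filter _ _ HIM
              (series_unif_cv v s f h F Hv Hs Hf Hh HF)) as [J [HJlim HJ]].
  exists J. split.
  - eapply is_RInt_ext; [|exact HJ].
    intros x Hx. rewrite Rmin_left, Rmax_right in Hx by lra.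
    cbv beta. rewrite clamp_id by lra. reflexivity.
  - apply is_lim_seq_Reals. exact HJlim.
Qed.

(** * The cosine coefficients of psi in two ways *)

Lemma Rabs_cos_le_1 x : Rabs (cos x) <= 1.
Proof. apply Rabs_le. pose proof (COS_bound x). lra. Qed.

Lemma RInt_psi_cos_dim1 psi b1 q : SchoenbergCoeffs 1 psi b1 ->
  is_RInt (fun t => psi t * cos (INR q * t)) 0 PI (cos_sq_int q * b1 q).
Proof.
  intros [Hpos [Hsum Hexp]].
  set (I := fun j : nat => PI / 2 * (zdelta (Z.of_nat j + Z.of_nat q) + zdelta (Z.of_nat j - Z.of_nat q))).
  assert (HI : forall j, is_RInt (fun t => cos (INR j * t) * cos (INR q * t)) 0 PI (I j)).
  { intro j. unfold I. rewrite !INR_IZR_INZ. apply RInt_cos_cos. }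
  assert (HF : forall t, 0 <= t <= PI -> infinite_sum (fun j => b1 j * cos (INR j * t)) (psi t))
    by exact Hexp.
  destruct (series_RInt b1 1 (fun j t => cos (INR j * t)) (fun t => cos (INR q * t)) psi I
              Hpos Hsum (fun j t _ => Rabs_cos_le_1 _) (fun t _ => Rabs_cos_le_1 _) HI HF)
    as [J [HJ Hseries]].
  assert (HJv : J = cos_sq_int q * b1 q).
  { apply (uniqueness_sum (fun j => b1 j * I j)); [exact Hseries|].
    replace (cos_sq_int q * b1 q) with (b1 q * I q).
    - apply (inf_single (fun j => b1 j * I j)). intros j Hj. unfold I, zdelta.
      destruct (Z.eqb_spec (Z.of_nat j + Z.of_nat q) 0); [lia|].
      destruct (Z.eqb_spec (Z.of_nat j - Z.of_nat q) 0); [lia|]. ring.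
    - unfold I, cos_sq_int.
      replace (Z.of_nat q + Z.of_nat q)%Z with (2 * Z.of_nat q)%Z by lia.
      rewrite Z.sub_diag. unfold zdelta at 2. simpl. ring. }
  rewrite <- HJv. exact HJ.
Qed.

Lemma RInt_psi_cos_odd k psi b q : (1 <= k)%nat -> SchoenbergCoeffs (2 * k + 1) psi b ->
  exists J, is_RInt (fun t => psi t * cos (INR q * t)) 0 PI J
         /\ infinite_sum (fun m => b m * (cos_sq_int q * ecoef k m q)) J.
Proof.
  intros Hk [Hpos [Hsum Hexp]].
  apply (series_RInt b 1 (fun m t => gegen_cos (INR k) t m / gegen_one (INR k) m)); auto.
  - intros; apply schoen_term_odd_bound, Hk.
  - intros; apply Rabs_cos_le_1.
  - intro m. apply RInt_gegen_cos, Hk.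
  - intros t Ht. apply (inf_ext (fun m => b m * schoen_term (2 * k + 1) m t)); [|auto].
    intro m. rewrite schoen_term_odd by exact Hk. reflexivity.
Qed.

Lemma cosine_coeff_expansion k psi b1 b q : (1 <= k)%nat ->
  SchoenbergCoeffs 1 psi b1 -> SchoenbergCoeffs (2 * k + 1) psi b ->
  infinite_sum (fun m => b m * ecoef k m q) (b1 q).
Proof.
  intros Hk Hb1 Hb.
  destruct (RInt_psi_cos_odd k psi b q Hk Hb) as [J [HJ Hseries]].
  assert (HJ1 : J = cos_sq_int q * b1 q).
  { rewrite <- (is_RInt_unique _ _ _ _ HJ).
    apply is_RInt_unique, RInt_psi_cos_dim1, Hb1. }
  pose proof (cos_sq_int_pos q).
  apply (inf_ext (fun m => / cos_sq_int q * (b m * (cos_sq_int q * ecoef k m q)))).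
  { intro m. field. lra. }
  replace (b1 q) with (/ cos_sq_int q * J) by (rewrite HJ1; field; lra).
  apply inf_scal, Hseries.
Qed.

Theorem theorem1 (k : nat) (psi : R -> R) (b1 b : nat -> R) :
  (1 <= k)%nat ->
  InPsi (2 * k + 1) psi ->
  SchoenbergCoeffs 1 psi b1 ->
  SchoenbergCoeffs (2 * k + 1) psi b ->
  forall n : nat, b n = sum_f_R0 (fun i => acoef i n k * b1 (n + 2 * i)%nat) k.
Proof.
  intros Hk _ Hb1 Hb n.
  (* sum_i a_i b1_(n+2i) = sum_m b_m sum_i a_i ecoef k m (n+2i) = sum_m b_m [m = n]. *)
  assert (Hcomb := inf_lincomb k (fun i => acoef i n k)
                     (fun i m => b m * ecoef k m (n + 2 * i))
                     (fun i => b1 (n + 2 * i)%nat)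
                     (fun i _ => cosine_coeff_expansion k psi b1 b (n + 2 * i) Hk Hb1 Hb)).
  apply (uniqueness_sum (fun m => b m * (if Nat.eq_dec m n then 1 else 0))).
  - replace (b n) with (b n * (if Nat.eq_dec n n then 1 else 0))
      by (destruct (Nat.eq_dec n n); [ring | lia]).
    apply (inf_single (fun m => b m * (if Nat.eq_dec m n then 1 else 0))).
    intros j Hj. destruct (Nat.eq_dec j n); [lia | ring].
  - apply (inf_ext (fun m => sum_f_R0 (fun i => acoef i n k * (b m * ecoef k m (n + 2 * i))) k));
      [|exact Hcomb].
    intro m. rewrite <- (biorth k n m Hk), <- sum_scal_l. apply sum_eq. intros; ring.
Qed.
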